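(* Let $G$ be a graph with vertices $v_1,\ldots,v_n$ and let $t\ge 1$ be an integer. Let $G'$ and $\alpha$ be constructed as follows. $V(G')=V_G\cup V_B\cup V_C$, where $V_G=\{g_1,\ldots,g_n\}$ induces a copy of $G$ ($g_ig_j$ an edge iff $v_iv_j\in E(G)$); $V_B=\{b^i_j\mid i,j\in\{1,\ldots,t\}\}$ induces a copy of $B_t$ (with $b^i_j b^{i'}_{j'}$ an edge iff $i\neq i'$ and $j\neq j'$); every vertex of $V_G$ is adjacent to every vertex of $V_B$; and $V_C=C_1\cup\cdots\cup C_{n+t+1}$ where the $C_i$ are pairwise disjoint independent sets, each of size $2t+2t^2$, with no edges between different $C_i$. Further, each $g_i$ is adjacent to all vertices of $V_C\setminus(C_i\cup C_{n+t+1})$ and each vertex of $V_B$ is adjacent to all vertices of $C_{n+t+1}$; there are no other edges. Define $\alpha(g_i)=i$ for $1\le i\le n$, $\alpha(c)=i$ for every $c\in C_i$ ($1\le i\le n+t+1$), and $\alpha(b^i_j)=n+i$. Let $k=n+t+1$ and let $\alpha_0,\ldots,\alpha_\ell$ be a $k$-recoloring sequence of $G'$ with $\alpha_0=\alpha$ and $\ell\le 2t+2t^2$. Then for all $g_i\in V_G$ and all $0\le x\le \ell$, $\alpha_x(g_i)\in\{i,n+t+1\}$, and for all $b\in V_B$ and all $0\le x\le\ell$, $\alpha_x(b)\ne n+t+1$.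
   Context: A $k$-coloring of a graph is a map $V\to\{1,\ldots,k\}$ with adjacent vertices receiving different colors. $\mathcal{C}_k(G)$ is the graph whose vertices are the $k$-colorings of $G$, two adjacent iff they differ on exactly one vertex. A $k$-recoloring sequence of length $m$ is a sequence $\alpha_0,\ldots,\alpha_m$ of $k$-colorings such that consecutive colorings are equal or adjacent in $\mathcal{C}_k(G)$. *)

From mathcomp Require Import all_boot.
Set Implicit Arguments. Unset Strict Implicit. Unset Printing Implicit Defensive.

Definition is_coloring (V : finType) (adj : rel V) (k : nat) (f : V -> nat) : Prop :=
  (forall v, 1 <= f v <= k) /\ (forall u v, adj u v -> f u != f v).

Definition recoloring_seq (V : finType) (adj : rel V) (k : nat)
    (alpha : nat -> V -> nat) (l : nat) : Prop :=
  (forall x, x <= l -> is_coloring adj k (alpha x)) /\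
  (forall x, x < l -> #|[set v | alpha x v != alpha x.+1 v]| <= 1).

(* Vertex set of G':
   inl (inl i)      = g_{i+1}          (i : 'I_n)
   inl (inr (i,j))  = b^{i+1}_{j+1}    (i j : 'I_t)
   inr (c, m)       = m-th vertex of C_{c+1}  (c : 'I_(n+t+1), m : 'I_(2t+2t^2)) *)
Definition Gp_vert (n t : nat) : finType :=
  (('I_n + ('I_t * 'I_t)) + ('I_(n + t + 1) * 'I_(2 * t + 2 * t ^ 2)))%type.

Definition Gp_adj (n t : nat) (G : rel 'I_n) : rel (Gp_vert n t) :=
  fun u v =>
  match u, v with
  | inl (inl a), inl (inl b) => G a b
  | inl (inr (i, j)), inl (inr (i', j')) => (i != i') && (j != j')
  | inl (inl _), inl (inr _) => true
  | inl (inr _), inl (inl _) => true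
  | inl (inl a), inr (c, _) => (nat_of_ord c != nat_of_ord a) && (nat_of_ord c != n + t)
  | inr (c, _), inl (inl a) => (nat_of_ord c != nat_of_ord a) && (nat_of_ord c != n + t)
  | inl (inr _), inr (c, _) => nat_of_ord c == n + t
  | inr (c, _), inl (inr _) => nat_of_ord c == n + t
  | inr _, inr _ => false
  end.

Definition Gp_alpha (n t : nat) (v : Gp_vert n t) : nat :=
  match v with
  | inl (inl a) => (nat_of_ord a).+1
  | inl (inr (i, _)) => n + (nat_of_ord i).+1
  | inr (c, _) => (nat_of_ord c).+1
  end.

(* In at most 2t+2t^2 steps at most 2t+2t^2 vertices get recoloured, so
   whenever a vertex of V_G or V_B has changed colour, every class C_j, being
   of size 2t+2t^2, still contains a vertex of its original colour j.  A
   recoloured vertex adjacent to all of C_j therefore cannot take colour j.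
   This excludes for g_i every colour except i and n+t+1 (g_i sees all C_j
   with j distinct from i and n+t+1), and excludes n+t+1 for b^i_j (which
   sees C_{n+t+1}, and for which n+t+1 is not the initial colour). *)

From mathcomp Require Import all_boot.

Section RecoloringSequence.

Context {V : finType} {adj : rel V} {k : nat} {alpha : nat -> V -> nat} {l : nat}.
Hypothesis hseq : recoloring_seq adj k alpha l.

Definition recolored x := [set v | alpha x v != alpha 0 v].

Lemma card_recolored x : x <= l -> #|recolored x| <= x.
Proof.
case: hseq => _ hstep; elim: x => [|x IH] hx.
  by rewrite leqn0 cards_eq0; apply/eqP/setP => v; rewrite !inE eqxx.
have sub : recolored x.+1 \subset recolored x :|: [set v | alpha x v != alpha x.+1 v].
  apply/subsetP => v; rewrite !inE.
  by case: (eqVneq (alpha x v) (alpha 0 v)) => [<-|] //=; rewrite eq_sym.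
apply: leq_trans (subset_leq_card sub) _.
apply: leq_trans (leq_card_setU _ _) _.
by rewrite -[leqRHS]addn1 leq_add ?IH ?hstep // ltnW.
Qed.

Lemma exists_unrecolored {S : {set V}} {x : nat} :
  x <= l -> x < #|S| -> exists2 w, w \in S & alpha x w = alpha 0 w.
Proof.
move=> hx hS; have /set0Pn [w] : S :\: recolored x != set0.
  apply: contraTneq hS => /eqP; rewrite setD_eq0 => sub.
  by rewrite -leqNgt (leq_trans (subset_leq_card sub)) ?card_recolored.
by rewrite !inE negbK => /andP [/eqP ? ?]; exists w.
Qed.

End RecoloringSequence.

Section Construction.

Context {n t : nat} {G : rel 'I_n} {alpha : nat -> Gp_vert n t -> nat} {l : nat}.
Hypothesis hseq : recoloring_seq (@Gp_adj n t G) (n + t + 1) alpha l.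
Hypothesis h0 : alpha 0 = @Gp_alpha n t.
Hypothesis hl : l <= 2 * t + 2 * t ^ 2.

Definition color_class (j : 'I_(n + t + 1)) : {set Gp_vert n t} :=
  [set inr (j, m) | m : 'I_(2 * t + 2 * t ^ 2)].

Lemma class_keeps_color {x : nat} {v : 'I_n + ('I_t * 'I_t)} (j : 'I_(n + t + 1)) :
  x <= l -> alpha x (inl v) != alpha 0 (inl v) ->
  exists m, alpha x (inr (j, m)) = j.+1.
Proof.
move=> hx hv.
have vNC : inl v \notin color_class j by apply/imsetP => -[].
have size_vC : x < #|inl v |: color_class j|.
  rewrite cardsU1 vNC card_imset ?card_ord; last by move=> ? ? [].
  by rewrite add1n ltnS (leq_trans hx hl).
have [w] := exists_unrecolored hseq hx size_vC.
rewrite !inE => /predU1P [-> /eqP|/imsetP [m _ ->]]; first by rewrite (negPf hv).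
by rewrite h0; exists m.
Qed.

Lemma recolored_avoids_class {x : nat} {v : 'I_n + ('I_t * 'I_t)} (j : 'I_(n + t + 1)) :
  x <= l -> alpha x (inl v) != alpha 0 (inl v) ->
  (forall m, Gp_adj G (inl v) (inr (j, m))) -> alpha x (inl v) != j.+1.
Proof.
move=> hx hv hadj; have [m hm] := class_keeps_color j hx hv.
have [_ proper] := hseq.1 x hx.
by rewrite -hm; apply: proper.
Qed.

End Construction.

Theorem mainTheorem2 (n t : nat) (G : rel 'I_n)
    (Gsym : symmetric G) (Girr : irreflexive G) (ht : 1 <= t)
    (alpha : nat -> Gp_vert n t -> nat) (l : nat)
    (hseq : recoloring_seq (@Gp_adj n t G) (n + t + 1) alpha l)
    (h0 : alpha 0 = @Gp_alpha n t)
    (hl : l <= 2 * t + 2 * t ^ 2) :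
  (forall (i : 'I_n) (x : nat), x <= l ->
     (alpha x (inl (inl i)) == (nat_of_ord i).+1) ||
     (alpha x (inl (inl i)) == n + t + 1)) /\
  (forall (p : 'I_t * 'I_t) (x : nat), x <= l ->
     alpha x (inl (inr p)) != n + t + 1).
Proof.
have top_lt : n + t < n + t + 1 by rewrite addn1.
split=> [i x hx | [p1 p2] x hx].
- have [/(_ (inl (inl i))) /andP [c_gt0 c_le] _] := hseq.1 x hx.
  set c := alpha x (inl (inl i)) in c_gt0 c_le *.
  case: (eqVneq c i.+1) => //= c_ne_i; apply/negPn/negP => c_ne_top.
  have j_lt : c.-1 < n + t + 1 by rewrite (leq_trans _ c_le) // ltn_predL.
  have hv : c != alpha 0 (inl (inl i)) by rewrite h0.
  have hadj m : Gp_adj G (inl (inl i)) (inr (Ordinal j_lt, m)).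
    rewrite /= -(inj_eq succn_inj) prednK // c_ne_i /=.
    by rewrite -(inj_eq succn_inj) prednK // -addn1.
  have := recolored_avoids_class hseq h0 hl (Ordinal j_lt) hx hv hadj.
  by rewrite /= prednK // eqxx.
- apply/eqP => hc.
  have hv : alpha x (inl (inr (p1, p2))) != alpha 0 (inl (inr (p1, p2))).
    by rewrite hc h0 /= addn1 -addnS eqn_add2l eqSS neq_ltn ltn_ord orbT.
  have := recolored_avoids_class hseq h0 hl (Ordinal top_lt) hx hv (fun _ => eqxx _).
  by rewrite hc /= addn1 eqxx.
Qed.
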